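(* Let $q \geq 5$ be a prime power and let $\mathcal{X}$ be a plane curve of degree $q-1$ defined over $\mathbb{F}_q$ without $\mathbb{F}_q$-linear components with $\mathrm{N}_q(\mathcal{X}) = (q-1)^2$. Then $k_0 \leq q-4$.
   Context: $\mathcal{X}(\mathbb{F}_q)=\mathcal{X}\cap\mathbb{P}^2(\mathbb{F}_q)$, $\mathrm{N}_q(\mathcal{X})=\#\mathcal{X}(\mathbb{F}_q)$; ''without $\mathbb{F}_q$-linear components'' means no line defined over $\mathbb{F}_q$ is a component. For $0\le i\le q+1$, $a_i$ is the number of $\mathbb{F}_q$-lines $l$ with $\#(l\cap\mathcal{X}(\mathbb{F}_q))=i$, and $k_0 := \min\{i : a_i \neq 0\}$. *)

From HB Require Import structures.
From mathcomp Require Import all_boot all_order all_algebra.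
From mathcomp Require Import mpoly.
Set Implicit Arguments. Unset Strict Implicit. Unset Printing Implicit Defensive.
Import Order.TTheory GRing.Theory.
Local Open Scope ring_scope.

(* Points of P^2(F_q) (and F_q-lines, via their coefficient vectors) are
   represented by their normalized homogeneous coordinates: nonzero vectors
   of F^3 whose first nonzero coordinate equals 1. *)
Definition normalized (F : finFieldType) (v : {ffun 'I_3 -> F}) : bool :=
  [exists i : 'I_3, (v i == 1) && [forall j : 'I_3, (j < i)%N ==> (v j == 0)]].

Definition linform (F : finFieldType) (c : {ffun 'I_3 -> F}) : {mpoly F[3]} :=
  \sum_(i < 3) c i *: 'X_i.

Definition curve_pts (F : finFieldType) (P : {mpoly F[3]}) : {set {ffun 'I_3 -> F}} :=
  [set v | normalized v & P.@[fun i => v i] == 0].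

Definition Nq (F : finFieldType) (P : {mpoly F[3]}) : nat := #|curve_pts P|.

Definition line_count (F : finFieldType) (P : {mpoly F[3]}) (c : {ffun 'I_3 -> F}) : nat :=
  #|[set v in curve_pts P | \sum_(i < 3) c i * v i == 0]|.

Definition a_count (F : finFieldType) (P : {mpoly F[3]}) (i : nat) : nat :=
  #|[set c | normalized c & line_count P c == i]|.

Definition k0 (F : finFieldType) (P : {mpoly F[3]}) : nat :=
  find (fun i => a_count P i != 0%N) (iota 0 (#|F|.+2)).

Definition no_Fq_linear_components (F : finFieldType) (P : {mpoly F[3]}) : Prop :=
  forall c : {ffun 'I_3 -> F}, c != 0 -> ~ (exists G : {mpoly F[3]}, P = linform c * G).

(* If k0 > q - 4, every F_q-line meets X(F_q) in at least q - 3 points, and a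
   line that is not a component of the degree-(q-1) curve meets it in at most
   q - 1 points: restricted to the line, the defining polynomial becomes a binary
   form of degree q - 1, which vanishes identically only if the line divides it.
   Hence (n_c - (q - 3)) (q - 1 - n_c) >= 0 for the number n_c of points on each
   line c.  Summing over the q^2 + q + 1 lines and using the incidence counts
   sum n_c <= N (q + 1) and sum n_c (n_c - 1) >= N (N - 1) contradicts
   N = (q - 1)^2 as soon as q >= 5. *)

From HB Require Import structures.
From mathcomp Require Import all_boot all_order all_algebra.
From mathcomp Require Import mpoly.
From mathcomp Require Import zify ring.
Set Implicit Arguments. Unset Strict Implicit. Unset Printing Implicit Defensive.
Import Order.TTheory GRing.Theory.
Local Open Scope ring_scope.

Section Multiples.
Variables (R : comPzRingType) (a : R).

Definition multiple (x : R) : Prop := exists g, x = a * g.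

Lemma multiple0 : multiple 0.
Proof. by exists 0; rewrite mulr0. Qed.

Lemma multipleD x y : multiple x -> multiple y -> multiple (x + y).
Proof. by move=> [g ->] [h ->]; exists (g + h); rewrite mulrDr. Qed.

Lemma multipleMl x y : multiple y -> multiple (x * y).
Proof. by move=> [h ->]; exists (x * h); rewrite mulrCA. Qed.

Lemma multipleMr x y : multiple x -> multiple (x * y).
Proof. by rewrite mulrC; apply: multipleMl. Qed.

Lemma multiple_sum (I : Type) (r : seq I) (P : pred I) (F : I -> R) :
  (forall i, P i -> multiple (F i)) -> multiple (\sum_(i <- r | P i) F i).
Proof. by move=> HF; apply: big_ind => //; [exact: multiple0 | exact: multipleD]. Qed.

Lemma multiple_prodB (I : Type) (r : seq I) (P : pred I) (x y : I -> R) :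
  (forall i, P i -> multiple (x i - y i)) ->
  multiple (\prod_(i <- r | P i) x i - \prod_(i <- r | P i) y i).
Proof.
move=> Hxy; apply: (big_rec2 (fun u v => multiple (u - v))).
  by rewrite subrr; exact: multiple0.
move=> i u v Pi Huv.
have -> : x i * u - y i * v = (x i - y i) * u + y i * (u - v) by ring.
by apply: multipleD; [apply/multipleMr/Hxy | apply: multipleMl].
Qed.

Lemma multiple_expB x y e : multiple (x - y) -> multiple (x ^+ e - y ^+ e).
Proof.
move=> Hxy; have := @multiple_prodB _ (index_iota 0 e) xpredT (fun=> x) (fun=> y).
by rewrite !prodr_const_nat subn0; apply.
Qed.

End Multiples.

Section Composition.
Variables (R : comNzRingType) (n : nat).

Lemma comp_mpolyA k l (p : {mpoly R[n]}) (t : n.-tuple {mpoly R[k]})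
    (s : k.-tuple {mpoly R[l]}) :
  (p \mPo t) \mPo s = p \mPo [tuple tnth t i \mPo s | i < n].
Proof.
rewrite [p \mPo t]comp_mpolyEX [RHS]comp_mpolyEX raddf_sum; apply: eq_bigr => m _.
rewrite /= comp_mpolyZ !comp_mpolyX rmorph_prod; congr (_ *: _); apply: eq_bigr => i _.
by rewrite rmorphXn tnth_mktuple.
Qed.

Lemma multiple_sub_comp_mpoly (a p : {mpoly R[n]}) (t : n.-tuple {mpoly R[n]}) :
  (forall i, multiple a ('X_i - tnth t i)) -> multiple a (p - (p \mPo t)).
Proof.
move=> HX.
have -> : p - (p \mPo t) = \sum_(m <- msupp p) p@_m *: ('X_[m] - ('X_[m] \mPo t)).
  rewrite comp_mpolyEX [X in X - _]mpolyE -sumrB.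
  by apply: eq_bigr => m _; rewrite scalerBr.
apply: multiple_sum => m _; rewrite comp_mpolyX mpolyXE_id -mul_mpolyC.
by apply/multipleMl/multiple_prodB => i _; apply: multiple_expB.
Qed.

Lemma comp_mpoly_dhomog k d (p : {mpoly R[n]}) (t : n.-tuple {mpoly R[k]}) :
  (forall i, tnth t i \is 1.-homog) -> p \is d.-homog -> p \mPo t \is d.-homog.
Proof.
move=> Ht Hp; rewrite comp_mpolyEX big_seq; apply: rpred_sum => m Hm; apply: rpredZ.
have <- : mdeg m = d by exact: dhomog_mf Hp _ Hm.
rewrite comp_mpolyX mdegE.
apply: (big_rec2 (fun (y : {mpoly R[k]}) (e : nat) => y \is e.-homog)); first exact: dhomog1.
move=> i y e _ Hy; apply: dhomogM Hy.
by rewrite -[X in X.-homog]mul1n; apply: dhomogMn.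
Qed.
End Composition.

Lemma big_ord2 (R : Type) (idx : R) (op : Monoid.law idx) (F : 'I_2 -> R) :
  \big[op/idx]_(i < 2) F i = op (F ord0) (F ord_max).
Proof. by rewrite big_ord_recr big_ord1; congr (op (F _) _); apply: val_inj. Qed.

Section BinaryForms.
Variable d : nat.

Definition bmon (j : nat) : 'X_{1..2} := (U_(ord0) *+ j + U_(ord_max) *+ (d - j))%MM.

Lemma bmon0 j : bmon j ord0 = j.
Proof. by rewrite mnmDE !mulmnE !mnm1E /=; lia. Qed.

Lemma bmon1 j : bmon j ord_max = (d - j)%N.
Proof. by rewrite mnmDE !mulmnE !mnm1E /=; lia. Qed.

Lemma dhomog2_msupp (R : nzRingType) (Q : {mpoly R[2]}) m :
  Q \is d.-homog -> m \in msupp Q -> (m ord0 < d.+1)%N /\ bmon (m ord0) = m.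
Proof.
move=> Qd mQ; have : mdeg m = d by exact: dhomog_mf Qd _ mQ.
rewrite mdegE big_ord2 /= => md; split; first lia.
apply/mnmP => -[[|[|//]] i].
  by rewrite (_ : Ordinal i = ord0) ?bmon0 //; apply: val_inj.
by rewrite (_ : Ordinal i = ord_max) ?bmon1 -?md ?addKn //; apply: val_inj.
Qed.

Section Ring.
Variable R : nzRingType.
Implicit Type Q : {mpoly R[2]}.

Lemma dhomog2E Q : Q \is d.-homog -> Q = \sum_(j < d.+1) Q@_(bmon j) *: 'X_[bmon j].
Proof.
move=> Qd; apply/mpolyP => m; rewrite raddf_sum /=.
under eq_bigr => j _ do rewrite mcoeffZ mcoeffX.
have [mQ|/memN_msupp_eq0 Qm0] := boolP (m \in msupp Q); last first.
  by rewrite Qm0 big1 // => j _; case: eqP => [->|_]; rewrite ?Qm0 ?mul0r ?mulr0.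
have [md mE] := dhomog2_msupp Qd mQ.
rewrite (bigD1 (Ordinal md)) //= mE eqxx mulr1 big1 ?addr0 // => j /eqP ne_jm.
case: eqP => [Em|_]; last by rewrite mulr0.
by case: ne_jm; apply: val_inj; rewrite /= -Em bmon0.
Qed.

Definition dehomog Q : {poly R} := \poly_(j < d.+1) Q@_(bmon j).

Lemma size_dehomog Q : (size (dehomog Q) <= d.+1)%N.
Proof. exact: size_poly. Qed.

Lemma dehomog_eq0 Q : Q \is d.-homog -> dehomog Q = 0 -> Q = 0.
Proof.
move=> Qd f0; rewrite (dhomog2E Qd) big1 // => j _.
have := coef_poly d.+1 (fun j => Q@_(bmon j)) j.
by rewrite ltn_ord -/(dehomog Q) f0 coef0 => <-; rewrite scale0r.
Qed.
End Ring.

Section Field.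
Variable F : fieldType.
Implicit Types (Q : {mpoly F[2]}) (v : 'I_2 -> F).

Lemma meval_dhomog2 Q v : Q \is d.-homog ->
  Q.@[v] = \sum_(j < d.+1) Q@_(bmon j) * (v ord0 ^+ j * v ord_max ^+ (d - j)).
Proof.
move=> Qd; rewrite {1}(dhomog2E Qd) raddf_sum /=; apply: eq_bigr => j _.
by rewrite mevalZ mevalX big_ord2 bmon0 bmon1.
Qed.

Lemma meval_dhomog2_affine Q v : Q \is d.-homog -> v ord_max != 0 ->
  Q.@[v] = v ord_max ^+ d * (dehomog Q).[v ord0 / v ord_max].
Proof.
move=> Qd vn0; rewrite meval_dhomog2 // horner_poly big_distrr /=.
apply: eq_bigr => j _; have jd : (j <= d)%N by rewrite -ltnS.
rewrite (_ : v ord_max ^+ d = v ord_max ^+ (d - j) * v ord_max ^+ j); last by rewrite -exprD subnK.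
rewrite expr_div_n; have := expf_neq0 j vn0.
by move: (v ord_max ^+ j) => z z0; field.
Qed.

Lemma meval_dhomog2_infinity Q v : Q \is d.-homog -> v ord_max = 0 ->
  Q.@[v] = (dehomog Q)`_d * v ord0 ^+ d.
Proof.
move=> Qd v0; rewrite meval_dhomog2 // big_ord_recr /= subnn expr0 mulr1 big1 ?add0r.
  by rewrite coef_poly ltnSn.
by move=> j _; rewrite v0 expr0n subn_eq0 leqNgt ltn_ord !mulr0.
Qed.

End Field.

(* [f`_d == 0] counts the root at infinity of the degree-[d] binary form
   dehomogenizing to [f]. *)
Lemma card_proj_roots_le (F : finFieldType) (f : {poly F}) :
  f != 0 -> (size f <= d.+1)%N ->
  (#|[set x | root f x]| + (f`_d == 0)%R <= d)%N.
Proof.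
move=> f0 szf.
have : (#|[set x | root f x]| < size f)%N.
  rewrite cardE; apply: max_poly_roots => //; last exact: enum_uniq.
  by apply/allP => x; rewrite mem_enum inE.
have [fd0|fdn0] := eqP.
  suff : (size f <= d)%N by lia.
  rewrite leqNgt; apply/negP => szfd.
  by move: f0; rewrite -lead_coef_eq0 lead_coefE (_ : size f = d.+1) ?fd0 ?eqxx //; lia.
lia.
Qed.
End BinaryForms.

Lemma big_ord3 (R : Type) (idx : R) (op : Monoid.com_law idx) (k : 'I_3) (g : 'I_3 -> R) :
  \big[op/idx]_(i < 3) g i = op (g k) (op (g (lift k ord0)) (g (lift k ord_max))).
Proof.
rewrite (bigD1_ord k) //= big_ord_recl big_ord1.
by congr (op _ (op _ (g (lift k _)))); apply: val_inj.
Qed.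

Lemma ord3_lift (k i : 'I_3) : [\/ i = k, i = lift k ord0 | i = lift k ord_max].
Proof.
case: (unliftP k i) => [[[|[|//]] j] ->|->]; last by constructor 1.
- by constructor 2; congr lift; apply: val_inj.
- by constructor 3; congr lift; apply: val_inj.
Qed.

Section ProjectivePlane.
Variable F : finFieldType.
Implicit Types c u v w : {ffun 'I_3 -> F}.

Definition incident c v : bool := \sum_(i < 3) c i * v i == 0.

Definition on_line (X : {set {ffun 'I_3 -> F}}) c := [set v in X | incident c v].

Lemma incidentC c v : incident c v = incident v c.
Proof. by rewrite /incident; under eq_bigr do rewrite mulrC. Qed.

Lemma normalizedP v :
  normalized v -> exists k : 'I_3, v k = 1 /\ forall j : 'I_3, (j < k)%N -> v j = 0.
Proof.
case/existsP => k /andP[/eqP vk /forallP v0]; exists k; split => // j jk.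
by apply/eqP; move: (v0 j); rewrite jk.
Qed.

Lemma normalized_neq0 v : normalized v -> v != 0.
Proof.
case/normalizedP => k [vk _]; apply: contra_eq_neq vk => ->.
by rewrite ffunE eq_sym oner_neq0.
Qed.

Lemma normalized_scale_eq v w (mu : F) :
  normalized v -> normalized w -> (forall i, w i = mu * v i) -> v = w.
Proof.
case/normalizedP => k [vk v0]; case/normalizedP => l [wl w0] wE.
have one_neq0 : (1 : F) != 0 by rewrite oner_neq0.
case: (ltngtP k l) => [kl|lk|/val_inj kl].
- have mu0 : mu = 0 by rewrite -[mu]mulr1 -vk -wE w0.
  by move: one_neq0; rewrite -wl wE mu0 mul0r eqxx.
- by move: one_neq0; rewrite -wl wE (v0 _ lk) mulr0 eqxx.
- have mu1 : mu = 1 by move: wl; rewrite wE -kl vk mulr1.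
  by apply/ffunP => i; rewrite wE mu1 mul1r.
Qed.

Lemma normalize u : u != 0 -> exists2 v, normalized v & exists mu : F, forall i, v i = mu * u i.
Proof.
move=> u0; have [i0 ui0] : exists i, u i != 0.
  apply/existsP; apply: contraNT u0 => /existsPn u0.
  by apply/eqP/ffunP => i; rewrite ffunE; apply/eqP/negPn.
case: (@arg_minnP _ i0 (fun i => u i != 0) val ui0) => k uk kmin.
exists [ffun i => (u k)^-1 * u i]; last by exists (u k)^-1 => i; rewrite ffunE.
apply/existsP; exists k; rewrite ffunE mulVf // eqxx /=.
apply/forallP => j; apply/implyP => jk; rewrite ffunE mulf_eq0; apply/orP; right.
by apply: contraTT jk => /kmin; rewrite -leqNgt.
Qed.

Section Line.
Variables (c : {ffun 'I_3 -> F}) (k : 'I_3).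
Hypothesis ck : c k = 1.
Local Notation a := (lift k ord0).
Local Notation b := (lift k ord_max).

Lemma incident_pivot v : incident c v -> v k = - (c a * v a + c b * v b).
Proof. by rewrite /incident (big_ord3 _ k) ck mul1r addr_eq0 => /eqP. Qed.

Lemma incident_scale v w (mu : F) : incident c v -> incident c w ->
  w a = mu * v a -> w b = mu * v b -> forall i, w i = mu * v i.
Proof.
move=> /incident_pivot vk /incident_pivot wk wa wb i.
by case: (ord3_lift k i) => ->; rewrite // vk wk wa wb; ring.
Qed.

Lemma on_line_ratio_inj v w : normalized v -> normalized w -> incident c v -> incident c w ->
  v b != 0 -> w b != 0 -> v a / v b = w a / w b -> v = w.
Proof.
move=> nv nw cv cw vb wb E; apply: (normalized_scale_eq (mu := w b / v b)) nv nw _.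
apply: incident_scale cv cw _ _; last by rewrite divfK.
by rewrite -[w a](divfK wb) -E; field.
Qed.

Lemma on_line_infinity v : normalized v -> incident c v -> v b = 0 -> v a != 0.
Proof.
move=> nv cv vb; apply: contra_neq (normalized_neq0 nv) => va.
apply/ffunP => i; rewrite ffunE.
by case: (ord3_lift k i) => ->; rewrite ?(incident_pivot cv) ?va ?vb ?mulr0 ?addr0 ?oppr0.
Qed.

Lemma on_line_infinity_uniq v w : normalized v -> normalized w -> incident c v -> incident c w ->
  v b = 0 -> w b = 0 -> v = w.
Proof.
move=> nv nw cv cw vb wb; have va := on_line_infinity nv cv vb.
apply: (normalized_scale_eq (mu := w a / v a)) nv nw _.
by apply: incident_scale cv cw _ _; rewrite ?divfK // vb wb mulr0.
Qed.

Section LineSubset.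
Variable S : {set {ffun 'I_3 -> F}}.
Hypothesis S_line : forall v, v \in S -> normalized v && incident c v.

Lemma card_split_at_infinity :
  #|S| = (#|(fun v => v a / v b) @: [set v in S | v b != 0%R]| + #|[set v in S | v b == 0%R]|)%N.
Proof.
rewrite -(cardsID [set v : {ffun _ -> F} | v b != 0] S) card_in_imset; last first.
  move=> v w; rewrite !inE => /andP[/S_line/andP[nv cv] vb] /andP[/S_line/andP[nw cw] wb].
  exact: on_line_ratio_inj.
by congr (_ + _)%N; apply: eq_card => v; rewrite !inE ?negbK andbC.
Qed.

Lemma card_at_infinity_le1 : (#|[set v in S | v b == 0%R]| <= 1)%N.
Proof.
apply/card_le1_eqP => v w; rewrite !inE => /andP[/S_line/andP[nv cv] /eqP vb].
by move=> /andP[/S_line/andP[nw cw] /eqP wb]; apply: on_line_infinity_uniq.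
Qed.
End LineSubset.
End Line.

Lemma card_lines_through v : normalized v ->
  (#|[set c | normalized c & incident c v]| <= #|F|.+1)%N.
Proof.
case/normalizedP => k [vk _].
have S_line c : c \in [set c | normalized c & incident c v] -> normalized c && incident v c.
  by rewrite inE incidentC.
rewrite (card_split_at_infinity vk S_line) -[#|F|.+1]addn1 leq_add ?max_card //.
by have := card_at_infinity_le1 vk S_line.
Qed.

Lemma exists_common_line v w : exists2 c, normalized c & incident c v && incident c w.
Proof.
pose A : 'M[F]_(3, 2) := \matrix_(i, j) (if j == ord0 then v i else w i).
have /rowV0Pn[x /sub_kermxP xA x0] : kermx A != 0.
  by rewrite -mxrank_eq0 mxrank_ker subn_eq0 -ltnNge (leq_ltn_trans (rank_leq_col A)).
have [|c nc [mu cE]] := normalize (u := [ffun l => x 0 l]).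
  apply: contra_neq x0 => /ffunP x0'; apply/rowP => l.
  by have := x0' l; rewrite !ffunE mxE.
have xAj j : \sum_(l < 3) x 0 l * A l j = 0.
  by have := congr1 (fun M : 'rV_2 => M 0 j) xA; rewrite !mxE.
have incE (z : {ffun 'I_3 -> F}) : \sum_(l < 3) x 0 l * z l = 0 -> incident c z.
  move=> xz; apply/eqP; under eq_bigr do rewrite cE ffunE -mulrA.
  by rewrite -mulr_sumr xz mulr0.
exists c => //; apply/andP; split; apply: incE.
- by have := xAj ord0; under eq_bigr do rewrite mxE /=.
- by have := xAj ord_max; under eq_bigr do rewrite mxE /=.
Qed.

Definition vec3 (x y z : F) : {ffun 'I_3 -> F} := [ffun i : 'I_3 => [:: x; y; z]`_i].

Lemma vec3_inj x y z x' y' z' : vec3 x y z = vec3 x' y' z' -> [/\ x = x', y = y' & z = z'].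
Proof. by move=> /ffunP E; move: (E ord0) (E (lift ord0 ord0)) (E ord_max); rewrite !ffunE. Qed.

Lemma card_normalized_ge : (#|F| ^ 2 + #|F| + 1 <= #|[set v : {ffun 'I_3 -> F} | normalized v]|)%N.
Proof.
pose emb (s : (F * F) + (F + unit)) : {ffun 'I_3 -> F} :=
  match s with inl (x, y) => vec3 1 x y | inr (inl y) => vec3 0 1 y | inr (inr _) => vec3 0 0 1 end.
have emb_inj : injective emb.
  have one_neq0 : (1 : F) <> 0 by apply/eqP; rewrite oner_eq0.
  by case=> [[x y]|[y|[]]] [[x' y']|[y'|[]]] /= /vec3_inj [] => // *; subst; congruence.
have emb_norm s : normalized (emb s).
  apply/existsP; case: s => [[x y]|[y|[]]] /=;
    [exists ord0 | exists (lift ord0 ord0) | exists ord_max];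
    by rewrite ffunE /= eqxx; apply/forallP => -[[|[|[|//]]] ?]; rewrite ?ffunE /= ?eqxx.
rewrite (_ : (_ + _ + _)%N = #|[set: (F * F) + (F + unit)]|); last first.
  by rewrite cardsT card_sum card_prod card_sum card_unit addnA.
rewrite -(card_imset _ emb_inj); apply/subset_leq_card/subsetP => _ /imsetP[s _ ->].
by rewrite inE.
Qed.
End ProjectivePlane.

Lemma card_set_in_sum (T : finType) (A : {set T}) (p : pred T) :
  #|[set x in A | p x]| = (\sum_(x in A) p x)%N.
Proof.
rewrite -sum1_card big_mkcond [RHS]big_mkcond /=; apply: eq_bigr => x _.
by rewrite inE; case: (x \in A); case: (p x).
Qed.

Lemma sqr_le_between (a b l : nat) : (a <= l <= b -> l * l + a * b <= (a + b) * l)%N.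
Proof. by move=> /andP[al lb]; nia. Qed.

(* The hypotheses force (q - 3) (q^2 + q + 1) <= (q - 1) (q^2 - q - 5),
   that is 2 q <= 8. *)
Lemma incidence_count_absurd (q N L S1 S2 : nat) : (5 <= q)%N -> N = ((q - 1) ^ 2)%N ->
  (q ^ 2 + q + 1 <= L)%N -> (S1 <= N * q.+1)%N -> (N * (N - 1) + S1 <= S2)%N ->
  (S2 + (q - 3) * (q - 1) * L <= (q - 3 + (q - 1)) * S1)%N -> False.
Proof.
move=> q5 NE hL hS1 hS2 htype.
have [p qE] : exists p, q = (p + 5)%N by exists (q - 5)%N; lia.
have e1 : (q - 1 = p + 4)%N by lia.
have e3 : (q - 3 = p + 2)%N by lia.
have N1 : (N - 1 = (p + 3) * (p + 5))%N by rewrite NE e1; lia.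
rewrite e1 in NE; rewrite e3 e1 in htype; rewrite N1 in hS2.
have hL' := leq_mul (leqnn ((p + 2) * (p + 4))) hL.
have hS1' := leq_mul (leqnn (2 * p + 5)) hS1.
rewrite qE in hL' hS1'; subst N q.
lia.
Qed.

Section Incidences.
Variable F : finFieldType.
Variable X : {set {ffun 'I_3 -> F}}.
Hypothesis X_normalized : forall v, v \in X -> normalized v.
Local Notation lines := [set c : {ffun 'I_3 -> F} | normalized c].

Lemma sum_card_on_line_le : (\sum_(c in lines) #|on_line X c| <= #|X| * #|F|.+1)%N.
Proof.
under eq_bigr do rewrite card_set_in_sum.
rewrite exchange_big -sum_nat_const; apply: leq_sum => v vX.
rewrite -card_set_in_sum (eq_card (B := [set c | normalized c & incident c v])).
  exact/card_lines_through/X_normalized.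
by move=> c; rewrite !inE.
Qed.

Lemma sum_card_on_line_sqr_ge :
  (#|X| * (#|X| - 1) + \sum_(c in lines) #|on_line X c| <= \sum_(c in lines) #|on_line X c| ^ 2)%N.
Proof.
have -> : (\sum_(c in lines) #|on_line X c| ^ 2 =
    \sum_(v in X) \sum_(w in X) \sum_(c in lines) incident c v * incident c w)%N.
  under eq_bigr do rewrite card_set_in_sum -mulnn big_distrl /=; rewrite exchange_big.
  by apply: eq_bigr => v _; under eq_bigr do rewrite big_distrr /=; rewrite exchange_big.
under eq_bigr do rewrite card_set_in_sum; rewrite exchange_big -sum_nat_const -big_split /=.
apply: leq_sum => v vX; rewrite (bigD1 v vX) /= addnC leq_add //.
  by under [X in (_ <= X)%N]eq_bigr do rewrite mulnb andbb.
rewrite -sum1_card (bigD1 v vX) /= add1n subn1; apply: leq_sum => w /andP[wX wv].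
have [c nc /andP[cv cw]] := exists_common_line v w.
by rewrite (bigD1 c) ?inE //= cv cw.
Qed.

Lemma no_set_of_type : (5 <= #|F|)%N -> #|X| = ((#|F| - 1) ^ 2)%N ->
  ~ (forall c, normalized c -> #|F| - 3 <= #|on_line X c| <= #|F| - 1)%N.
Proof.
move=> q5 NX Xtype; apply: (incidence_count_absurd q5 NX (card_normalized_ge F)).
- exact: sum_card_on_line_le.
- exact: sum_card_on_line_sqr_ge.
rewrite big_distrr /= mulnC -sum_nat_const -big_split /= leq_sum // => c.
by rewrite inE => /Xtype /sqr_le_between; rewrite mulnn.
Qed.
End Incidences.

Section LineChart.
Variable F : finFieldType.
Variables (c : {ffun 'I_3 -> F}) (k : 'I_3).
Hypothesis ck : c k = 1.
Local Notation a := (lift k ord0).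
Local Notation b := (lift k ord_max).

(* [line_param] maps (s, t) to the point of the line [c] whose coordinates at
   [a] and [b] are s and t; [line_coord] is the inverse chart. *)
Definition line_param : 3.-tuple {mpoly F[2]} :=
  [tuple if i == k then - (c a *: 'X_ord0 + c b *: 'X_ord_max)
         else if i == a then 'X_ord0 else 'X_ord_max | i < 3].

Definition line_coord (v : {ffun 'I_3 -> F}) : 'I_2 -> F :=
  fun j => if j == ord0 then v a else v b.

Let ak : (a == k) = false. Proof. by rewrite eq_sym (negbTE (neq_lift _ _)). Qed.
Let bk : (b == k) = false. Proof. by rewrite eq_sym (negbTE (neq_lift _ _)). Qed.
Let ba : (b == a) = false. Proof. by apply/negbTE/negP => /eqP/lift_inj. Qed.

Lemma line_param_homog i : tnth line_param i \is 1.-homog.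
Proof.
have X1 j : ('X_j : {mpoly F[2]}) \is 1.-homog by rewrite dhomogX; apply/eqP/mdeg1.
by rewrite tnth_mktuple; case: ifP => _; [rewrite rpredN rpredD // rpredZ | case: ifP].
Qed.

Lemma meval_line_param (P : {mpoly F[3]}) v :
  incident c v -> (P \mPo line_param).@[line_coord v] = P.@[v].
Proof.
move=> cv; rewrite comp_mpoly_meval; apply: meval_eq => i; rewrite tnth_mktuple.
case: (ord3_lift k i) => ->; rewrite ?eqxx ?ak ?bk ?ba ?(incident_pivot ck cv) ?mevalXU //.
by rewrite mevalN mevalD !mevalZ !mevalXU.
Qed.

(* Composing back with (X_a, X_b) substitutes - (c a X_a + c b X_b) for X_k,
   which is X_k modulo [linform c]. *)
Lemma line_param_multiple (P : {mpoly F[3]}) :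
  multiple (linform c) (P - ((P \mPo line_param) \mPo [tuple 'X_a; 'X_b])).
Proof.
rewrite comp_mpolyA; apply: multiple_sub_comp_mpoly => i; rewrite !tnth_mktuple.
case: (ord3_lift k i) => ->; rewrite ?eqxx ?ak ?bk ?ba ?comp_mpolyXU ?subrr; try exact: multiple0.
exists 1; rewrite mulr1 /linform (big_ord3 _ k) ck scale1r.
by rewrite raddfN raddfD /= !comp_mpolyZ !comp_mpolyXU opprK.
Qed.

Lemma card_zeros_on_line d (Q : {mpoly F[2]}) (S : {set {ffun 'I_3 -> F}}) :
  Q \is d.-homog -> Q != 0 ->
  (forall v, v \in S -> [&& normalized v, incident c v & Q.@[line_coord v] == 0]) ->
  (#|S| <= d)%N.
Proof.
move=> Qd Q0 S_zeros; set f := dehomog d Q.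
have f0 : f != 0 by apply: contra_neq Q0; apply: dehomog_eq0.
have S_line v : v \in S -> normalized v && incident c v.
  by move/S_zeros => /and3P[-> -> _].
have Qv0 v : v \in S -> Q.@[line_coord v] = 0 by move/S_zeros => /and3P[_ _ /eqP].
rewrite (card_split_at_infinity ck S_line).
apply: leq_trans (card_proj_roots_le f0 (size_dehomog d Q)); apply: leq_add.
  apply/subset_leq_card/subsetP => x /imsetP[v + ->]; rewrite !inE => /andP[vS vb].
  apply/rootP; move: (Qv0 v vS); rewrite (meval_dhomog2_affine Qd) //.
  by move/eqP; rewrite mulf_eq0 expf_eq0 (negbTE vb) andbF => /eqP.
have [->|[v]] := set_0Vmem [set v in S | v b == 0%R]; first by rewrite cards0.
rewrite inE => /andP[vS /eqP vb].
have /eqP -> : f`_d == 0.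
  move: (Qv0 v vS); rewrite (meval_dhomog2_infinity Qd) // => /eqP.
  have /andP[nv cv] := S_line v vS.
  by rewrite mulf_eq0 expf_eq0 (negbTE (on_line_infinity ck nv cv vb)) andbF orbF.
by rewrite eqxx; have := card_at_infinity_le1 ck S_line.
Qed.
End LineChart.

Lemma line_count_le (F : finFieldType) (P : {mpoly F[3]}) d c :
  P \is d.-homog -> no_Fq_linear_components P -> normalized c -> (line_count P c <= d)%N.
Proof.
move=> Pd noLP nc; have [k [ck _]] := normalizedP nc.
set Q := P \mPo line_param c k.
have Q0 : Q != 0.
  apply/eqP => Q0; apply: (noLP c (normalized_neq0 nc)).
  by have [G] := line_param_multiple ck P; rewrite -/Q Q0 comp_mpoly0 subr0; exists G.
have Qd : Q \is d.-homog := comp_mpoly_dhomog (line_param_homog c k) Pd.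
rewrite /line_count; apply: (card_zeros_on_line ck Qd Q0) => v.
by rewrite !inE => /andP[/andP[-> Pv] cv]; rewrite (cv : incident c v) meval_line_param.
Qed.

Lemma k0_le_line_count (F : finFieldType) (P : {mpoly F[3]}) c :
  normalized c -> (line_count P c <= #|F|.+1)%N -> (k0 P <= line_count P c)%N.
Proof.
move=> nc le_q1; rewrite leqNgt; apply/negP => /(before_find 0%N).
rewrite nth_iota ?add0n; last by lia.
by move/negbFE; rewrite cards_eq0 => /eqP/setP/(_ c); rewrite !inE nc eqxx.
Qed.

Theorem lemma3p13 (F : finFieldType) (P : {mpoly F[3]}) :
  (5 <= #|F|)%N ->
  P != 0 ->
  P \is (#|F| - 1)%N.-homog ->
  no_Fq_linear_components P ->
  Nq P = ((#|F| - 1) ^ 2)%N ->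
  (k0 P <= #|F| - 4)%N.
Proof.
move=> q5 _ Pd noLP NP; rewrite leqNgt; apply/negP => k0_gt.
have curve_normalized v : v \in curve_pts P -> normalized v by rewrite inE => /andP[].
apply: (no_set_of_type curve_normalized q5 NP) => c nc.
have le_q1 := line_count_le Pd noLP nc.
have le_k0 : (k0 P <= line_count P c)%N by apply: k0_le_line_count nc _; lia.
by change (#|F| - 3 <= line_count P c <= #|F| - 1)%N; lia.
Qed.
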